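(* Consider the two-player Tower of Hanoi game under normal play on three pegs with $n\ge1$ disks, with any of the ending conditions (EC1)–(EC5) (for $n=1$ only (EC1), (EC4), (EC5)). Then the first player (Anh) has a strategy that makes the game terminate with her making the last move; i.e. the first player wins. Moreover, the same holds from any non-final position with the player to move in the role of the first player, provided the previous player's move did not move the smallest disk.
   Context: Tower of Hanoi on $l$ pegs (here $l=3$, pegs labeled $1,\dots,l$) with $n$ disks of pairwise distinct sizes: a position assigns each disk to a peg, disks on each peg stacked with sizes decreasing from bottom to top. A legal move transfers the top disk of one peg to a different peg that is empty or has a larger top disk. A tower position is one with all disks on one peg. Two-player game: Anh (first player) and Bao (second player) alternate moves starting from the position with all disks on Peg 1; a player may not move the disk that the opponent moved in the immediately preceding move. The game ends when the tower has been transferred to a final peg, according to one fixed ending condition: (EC1) all disks on a given peg distinct from Peg 1; (EC2) all disks on Peg 1, the largest disk having been moved at least once; (EC3) all disks on Peg 1, the smallest disk having been moved at least once; (EC4) all disks on any peg, the largest disk having been moved at least once; (EC5) all disks on any peg, the smallest disk having been moved at least once. A move creating a tower position that does not end the game (tower on a non-final peg) is not allowed; (EC2) and (EC3) are not applicable for $n=1$. Normal play: the player who makes the last (game-ending) move wins; if neither player can force a win, the game is a draw. *)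

From mathcomp Require Import all_boot.
Set Implicit Arguments. Unset Strict Implicit. Unset Printing Implicit Defensive.

(* Disks are 'I_n, disk i having size i (0 = smallest, n.-1 = largest).
   Pegs are 'I_3; Peg 1 of the paper is ord0 (peg k is index k-1).
   A configuration assigns a peg to each disk; on each peg the disks are
   stacked in decreasing size from bottom to top, so the top disk of a peg
   is the smallest disk on it. *)
Definition config (n : nat) := {ffun 'I_n -> 'I_3}.

(* A game state: configuration, the disk moved in the immediately preceding
   move (None at the start), and whether the largest / smallest disk has
   already been moved at least once. *)
Record state (n : nat) := State {
  cfg : config n;
  last_disk : option 'I_n;
  movedL : bool;
  movedS : bool }.

Definition peg1 : 'I_3 := ord0.

Definition tower_on n (c : config n) (p : 'I_3) : Prop := forall i : 'I_n, c i = p.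
Definition is_tower n (c : config n) : Prop := exists p : 'I_3, tower_on c p.

Inductive ending := EC1 of 'I_3 | EC2 | EC3 | EC4 | EC5.

Definition valid_ending (n : nat) (ec : ending) : Prop :=
  match ec with
  | EC1 f => f <> peg1
  | EC2 | EC3 => 1 < n
  | EC4 | EC5 => True
  end.

Definition game_over n (ec : ending) (s : state n) : Prop :=
  match ec with
  | EC1 f => tower_on (cfg s) f
  | EC2 => tower_on (cfg s) peg1 /\ movedL s
  | EC3 => tower_on (cfg s) peg1 /\ movedS s
  | EC4 => (exists p, tower_on (cfg s) p) /\ movedL s
  | EC5 => (exists p, tower_on (cfg s) p) /\ movedS s
  end.

Definition hanoi_move n (c : config n) (d : 'I_n) (q : 'I_3) : Prop :=
  (forall i : 'I_n, i < d -> c i <> c d) /\ q <> c d /\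
  (forall i : 'I_n, i < d -> c i <> q).

Definition game_move n (ec : ending) (s s' : state n) : Prop :=
  ~ game_over ec s /\
  exists (d : 'I_n) (q : 'I_3),
    hanoi_move (cfg s) d q /\
    last_disk s <> Some d /\
    cfg s' = [ffun i => if i == d then q else cfg s i] /\
    last_disk s' = Some d /\
    movedL s' = movedL s || (nat_of_ord d == n.-1) /\
    movedS s' = movedS s || (nat_of_ord d == 0) /\
    (is_tower (cfg s') -> game_over ec s').

(* The player to move in s can force the game to terminate with her making
   the last (game-ending) move (inductive = in finitely many moves). *)
Inductive mover_wins n (ec : ending) : state n -> Prop :=
  | MoverWins (s s' : state n) :
      game_move ec s s' ->
      (game_over ec s' \/
        ((exists s'', game_move ec s' s'') /\
         (forall s'', game_move ec s' s'' -> mover_wins ec s''))) ->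
      mover_wins ec s.

Definition initial_state (n : nat) : state n :=
  State [ffun=> peg1] None false false.

(* Anh always moves the smallest disk.  Bao may not move it back, and with the
   smallest disk on a peg [w] the only legal move of the other ("big") disks is
   the one between the two pegs other than [w].  So each round amounts to Anh
   choosing any move of the big disks that avoids the current peg of the
   smallest disk.  Measured by the Hanoi distance of the big disks to a target
   peg, she follows a shortest path, losing at most four rounds whenever the
   smallest disk blocks it, until the big disks form a tower and the smallest
   disk joins them with the game-ending move.  When the largest disk must have
   moved, the big disks are first gathered on a peg other than the final one. *)

From mathcomp Require Import all_boot zify.
From Stdlib Require Import Classical FunctionalExtensionality.
Set Implicit Arguments. Unset Strict Implicit. Unset Printing Implicit Defensive.

Definition p0 : 'I_3 := @Ordinal 3 0 isT.
Definition p1 : 'I_3 := @Ordinal 3 1 isT.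
Definition p2 : 'I_3 := @Ordinal 3 2 isT.

Lemma peg_cases (x : 'I_3) : x = p0 \/ x = p1 \/ x = p2.
Proof.
case: x => [[|[|[|m]]] H]; [left|right; left|right; right|by []]; exact: val_inj.
Qed.

Ltac case_peg x := case: (peg_cases x) => [->|[->|->]].

Definition third (a b : 'I_3) : 'I_3 :=
  if (p0 != a) && (p0 != b) then p0 else if (p1 != a) && (p1 != b) then p1 else p2.

Lemma third_neql a b : a != b -> third a b != a.
Proof. by case_peg a; case_peg b. Qed.

Lemma third_neqr a b : a != b -> third a b != b.
Proof. by case_peg a; case_peg b. Qed.

Lemma eq_third a b x : a != b -> x != a -> x != b -> x = third a b.
Proof. by case_peg a; case_peg b; case_peg x. Qed.

Lemma no_fourth_peg (a b x y : 'I_3) :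
  a != b -> a != x -> b != x -> y != a -> y != b -> y != x -> False.
Proof. by case_peg a; case_peg b; case_peg x; case_peg y. Qed.

Definition another_peg (v : 'I_3) : 'I_3 := if v == p0 then p1 else p0.

Lemma another_peg_neq v : another_peg v != v.
Proof. by rewrite /another_peg; case_peg v. Qed.

(* The disks [1..k] of a position are given by [c : nat -> 'I_3], disk [i]
   having size [i]; values at other indices are irrelevant. *)
Definition move_disk (c : nat -> 'I_3) (j : nat) (q : 'I_3) : nat -> 'I_3 :=
  fun i => if i == j then q else c i.

Lemma move_disk_twice c j q q' : move_disk (move_disk c j q) j q' = move_disk c j q'.
Proof. by apply: functional_extensionality => i; rewrite /move_disk; case: (i == j). Qed.

Lemma move_disk_id c j : move_disk c j (c j) = c.
Proof. by apply: functional_extensionality => i; rewrite /move_disk; case: eqP => [->|]. Qed.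

(* The classical recursion: if disk [k] is not on [p], disks [1..k-1] go to
   the third peg, disk [k] moves, and a perfect tower of [k-1] disks follows. *)
Fixpoint hanoi_dist (c : nat -> 'I_3) (k : nat) (p : 'I_3) : nat :=
  if k is k'.+1 then
    if c k == p then hanoi_dist c k' p
    else 2 ^ k' + hanoi_dist c k' (third (c k) p)
  else 0.

Definition legal_move k (c : nat -> 'I_3) j q :=
  [/\ 0 < j <= k, q != c j & forall i, 0 < i < j -> (c i != c j) && (c i != q)].

(* With the smallest disk parked on [w], the only moves of the others are
   between the two remaining pegs. *)
Definition avoiding_move k c (w : 'I_3) j q :=
  [/\ legal_move k c j q, c j != w & q != w].

Lemma hanoi_dist_tower c k r p : (forall i, 0 < i <= k -> c i = r) ->
  hanoi_dist c k p = if r == p then 0 else 2 ^ k - 1.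
Proof.
elim: k p => [|k IH] p H /=; first by case: (r == p).
have Hk : forall i, 0 < i <= k -> c i = r by move=> i /andP[? ?]; apply: H; lia.
rewrite H; last lia.
have [<-|rp] := eqVneq r p; first by rewrite IH // eqxx.
rewrite IH //; move: rp => /third_neql; rewrite eq_sym => /negbTE ->.
by have := expn_gt0 2 k; rewrite expnS; lia.
Qed.

Lemma legal_move_narrow k c j q :
  legal_move k.+1 c j q -> j != k.+1 -> legal_move k c j q.
Proof. by case=> /andP[? ?] ? ? ?; split=> //; apply/andP; split=> //; lia. Qed.

Lemma legal_move_widen k c j q : legal_move k c j q -> legal_move k.+1 c j q.
Proof. by case=> /andP[? ?] ? ?; split=> //; apply/andP; split=> //; lia. Qed.

Lemma legal_move_undo k c j q : legal_move k c j q -> legal_move k (move_disk c j q) j (c j).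
Proof.
case=> jk qj Hi; split=> //; rewrite /move_disk ?eqxx; first by rewrite eq_sym.
move=> i /andP[i0 ij]; rewrite ifF; last by apply/eqP; lia.
by have /andP[-> ->] := Hi i (introT andP (conj i0 ij)).
Qed.

Lemma legal_move_smallest k c q : 0 < k -> q != c 1 -> legal_move k c 1 q.
Proof. by move=> k0 qc; split=> // i; lia. Qed.

Lemma hanoi_dist_move_le k c j q p :
  legal_move k c j q -> hanoi_dist (move_disk c j q) k p <= (hanoi_dist c k p).+1.
Proof.
elim: k p => [|k IH] p Hm; first by case: Hm => /andP[? ?]; lia.
rewrite /=; have [Ej|Nj] := eqVneq j k.+1.
- subst j; case: Hm => _ Hq Hi.
  have Hr : forall i, 0 < i <= k -> c i = third (c k.+1) q.
    move=> i /andP[i0 ik].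
    have /andP[? ?] : (c i != c k.+1) && (c i != q) by apply: Hi; rewrite i0; lia.
    by apply: eq_third; rewrite // eq_sym.
  have Hr' : forall i, 0 < i <= k -> move_disk c k.+1 q i = third (c k.+1) q.
    move=> i /andP[i0 ik]; rewrite /move_disk ifF; last by apply/eqP; lia.
    by apply: Hr; rewrite i0 ik.
  rewrite /move_disk eqxx !(hanoi_dist_tower _ Hr') !(hanoi_dist_tower _ Hr).
  have := expn_gt0 2 k; clear IH Hi Hr Hr'; move: Hq; move: (c k.+1) q p (2 ^ k) => a b e X.
  by case_peg a; case_peg b; case_peg e => //= _; lia.
- have Hm' := legal_move_narrow Hm Nj.
  have -> : move_disk c j q k.+1 = c k.+1 by rewrite /move_disk eq_sym (negbTE Nj).
  case: ifP => _; first exact: IH.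
  by rewrite -addnS leq_add2l; apply: IH.
Qed.

Lemma hanoi_dist_move_ge k c j q p :
  legal_move k c j q -> hanoi_dist c k p <= (hanoi_dist (move_disk c j q) k p).+1.
Proof. by move=> /legal_move_undo /(hanoi_dist_move_le p); rewrite move_disk_twice move_disk_id. Qed.

Lemma hanoi_dist_step k c p : (exists i, (0 < i <= k) && (c i != p)) ->
  exists j q, legal_move k c j q /\ (hanoi_dist (move_disk c j q) k p).+1 = hanoi_dist c k p.
Proof.
elim: k p => [|k IH] p; first by case=> i /andP[/andP[? ?] _]; lia.
case=> i /andP[/andP[i0 ik] ip].
have move_top : forall j q, j <= k -> move_disk c j q k.+1 = c k.+1.
  by move=> j q jk; rewrite /move_disk ifF //; apply/eqP; lia.
have [Ep|Np] := eqVneq (c k.+1) p.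
- have ik' : i <= k.
    by case: (ltngtP i k.+1) => // E; [lia|subst i; rewrite Ep eqxx in ip].
  have [j [q [Hm HF]]] : exists j q, legal_move k c j q /\
      (hanoi_dist (move_disk c j q) k p).+1 = hanoi_dist c k p.
    by apply: IH; exists i; rewrite i0 ik' ip.
  exists j, q; split; first exact: legal_move_widen.
  have jk : j <= k by case: Hm => /andP[].
  by rewrite /= move_top // Ep eqxx.
- set r := third (c k.+1) p.
  case: (classic (exists i, (0 < i <= k) && (c i != r))) => [Hex|Hno].
  + have [j [q [Hm HF]]] := IH r Hex.
    exists j, q; split; first exact: legal_move_widen.
    have jk : j <= k by case: Hm => /andP[].
    by rewrite /= move_top // (negbTE Np) -/r -addnS HF.
  + have Hall : forall i, 0 < i <= k -> c i = r.
      move=> i' Hi'; have [//|Hn] := eqVneq (c i') r.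
      by exfalso; apply: Hno; exists i'; rewrite Hi'.
    exists k.+1, p; split.
      split; [by rewrite ltn0Sn leqnn | by rewrite eq_sym | ].
      move=> i' /andP[? ?]; rewrite Hall; last by apply/andP; split=> //; lia.
      by rewrite third_neql // third_neqr.
    have Hall' : forall i, 0 < i <= k -> move_disk c k.+1 p i = r.
      move=> i' /andP[? ?]; rewrite /move_disk ifF; last by apply/eqP; lia.
      by apply: Hall; apply/andP; split.
    rewrite /= /move_disk eqxx (negbTE Np) -/move_disk.
    rewrite (hanoi_dist_tower _ Hall') (hanoi_dist_tower _ Hall) eqxx.
    have /negbTE -> : r != p by rewrite third_neqr.
    by rewrite /r eqxx; have := expn_gt0 2 k; lia.
Qed.

Lemma avoiding_move_uniq k c w j q j' q' :
  avoiding_move k c w j q -> avoiding_move k c w j' q' -> j = j' /\ q = q'.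
Proof.
move=> [[H1 H2 H3] a b] [[H1' H2' H3'] a' b'].
case: (ltngtP j j') => [lt|lt|E].
- have /andP[? ?] : (c j != c j') && (c j != q') by apply: H3'; rewrite lt; case/andP: H1 => ->.
  by exfalso; apply: (@no_fourth_peg w (c j') q' (c j)); rewrite // eq_sym.
- have /andP[? ?] : (c j' != c j) && (c j' != q) by apply: H3; rewrite lt; case/andP: H1' => ->.
  by exfalso; apply: (@no_fourth_peg w (c j) q (c j')); rewrite // eq_sym.
- subst j'; split=> //; apply/eqP; apply: contraT => nq.
  by exfalso; apply: (@no_fourth_peg w (c j) q q'); rewrite // eq_sym.
Qed.

Section Rounds.
Variables (k : nat) (p : 'I_3).

Definition gathered (B : nat -> 'I_3) := forall i, 0 < i <= k -> B i = p.

Definition ready B (v : 'I_3) := gathered B /\ v != p.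

Definition progress_available B (v : 'I_3) :=
  exists w j q, [/\ w != v, avoiding_move k B w j q &
                    hanoi_dist (move_disk B j q) k p < hanoi_dist B k p].

(* [v] is the peg of the smallest disk.  When no distance-decreasing move can
   be forced, two rounds (four if disk 1 lies on [v]) restore one. *)
Definition potential_le B v N :=
  (progress_available B v /\ hanoi_dist B k p <= N) \/
  (~ progress_available B v /\ v != B 1 /\ (hanoi_dist B k p).+2 <= N) \/
  (~ progress_available B v /\ v = B 1 /\ (hanoi_dist B k p).+4 <= N).

Lemma potential_le_exists B v : exists N, potential_le B v N.
Proof.
exists (hanoi_dist B k p).+4; case: (classic (progress_available B v)) => g.
  by left; split => //; lia.
by right; have [e|e] := eqVneq v (B 1); [right|left]; split => //; split => //; lia.
Qed.

Lemma potential_le0 B v : ~ potential_le B v 0.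
Proof. by case=> [[[w [j [q [_ _ h]]]] h']|[[_ [_ h]]|[_ [_ h]]]]; lia. Qed.

Lemma not_gathered B : ~ gathered B -> exists i, (0 < i <= k) && (B i != p).
Proof.
move=> H; apply: NNPP => H2; apply: H => i Hi.
by have [//|Hn] := eqVneq (B i) p; exfalso; apply: H2; exists i; rewrite Hi.
Qed.

(* A distance-decreasing move is unique among the moves avoiding its third
   peg, so the next one cannot avoid the same peg: it would undo it. *)
Lemma progress_persists B w j q :
  avoiding_move k B w j q -> hanoi_dist (move_disk B j q) k p < hanoi_dist B k p ->
  ~ gathered (move_disk B j q) -> progress_available (move_disk B j q) w.
Proof.
move=> [Hb jw qw] Hlt /not_gathered /hanoi_dist_step [j2 [q2 [Hb2 HF2]]].
set B' := move_disk B j q in Hb2 HF2 *.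
have Hd2 : B' j2 != q2 by case: Hb2 => _; rewrite eq_sym.
have [Ew|Ew] := eqVneq (third (B' j2) q2) w.
- have [E1 E2] : j2 = j /\ q2 = B j.
    apply: (@avoiding_move_uniq k B' w); split=> //.
    + by rewrite -Ew eq_sym third_neql.
    + by rewrite -Ew eq_sym third_neqr.
    + exact: legal_move_undo.
    + by rewrite /B' /move_disk eqxx.
  have := hanoi_dist_move_ge p Hb.
  by move: HF2; rewrite /B' E1 E2 move_disk_twice move_disk_id; lia.
- exists (third (B' j2) q2), j2, q2; split=> //; last lia.
  by split=> //; rewrite eq_sym ?third_neql ?third_neqr.
Qed.

Lemma round_with_progress B v N :
  progress_available B v -> hanoi_dist B k p <= N.+1 ->
  exists w j q, [/\ w != v, avoiding_move k B w j q &
    ready (move_disk B j q) w \/ potential_le (move_disk B j q) w N].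
Proof.
move=> [w [j [q [wv Hm Hlt]]]] HF; exists w, j, q; split=> //.
case: (classic (gathered (move_disk B j q))) => [Hall|Hnall].
- left; split=> //; case: Hm => [[jk _ _] _ qw].
  by move: (Hall j jk); rewrite /move_disk eqxx => <-; rewrite eq_sym.
- by right; left; split; [exact: progress_persists | lia].
Qed.

Lemma no_progress_step B v : ~ progress_available B v -> ~ gathered B ->
  exists j q, avoiding_move k B v j q /\
    (hanoi_dist (move_disk B j q) k p).+1 = hanoi_dist B k p.
Proof.
move=> Hnp /not_gathered /hanoi_dist_step [j [q [Hb HF]]].
have Hd : B j != q by case: Hb => _; rewrite eq_sym.
have [Ev|Ev] := eqVneq (third (B j) q) v.
- by exists j, q; split=> //; split; rewrite // -Ev eq_sym ?third_neql ?third_neqr.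
- exfalso; apply: Hnp; exists (third (B j) q), j, q; split=> //; last lia.
  by split; rewrite // eq_sym ?third_neql ?third_neqr.
Qed.

Hypothesis k_gt0 : 0 < k.

(* Without progress, the distance-decreasing move avoids [v], so it sends
   disk 1 to the third peg [u].  Sending disk 1 to [v] first does not shorten
   the distance, but afterwards that move to [u] can be forced. *)
Lemma round_without_progress B v N :
  ~ progress_available B v -> v != B 1 -> ~ ready B v ->
  (hanoi_dist B k p).+2 <= N.+1 ->
  exists w j q, [/\ w != v, avoiding_move k B w j q &
    potential_le (move_disk B j q) w N].
Proof.
move=> Hnp vB Hnr HF.
have Bv : B 1 != v by rewrite eq_sym.
set u := third (B 1) v.
have uv : u != v by rewrite third_neqr.
have Bu : B 1 != u by rewrite eq_sym third_neql.
have Hb1u : avoiding_move k B v 1 u.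
  by split=> //; apply: legal_move_smallest; rewrite // eq_sym.
have Hb1v : avoiding_move k B u 1 v.
  by split; rewrite ?(eq_sym v) //; apply: legal_move_smallest.
exists u, 1, v; split=> //; left.
have Hng : ~ gathered B.
  by move=> Hall; apply: Hnr; split=> //; rewrite -(Hall 1) ?k_gt0 // eq_sym.
have HFu : (hanoi_dist (move_disk B 1 u) k p).+1 = hanoi_dist B k p.
  have [j [q [Hb HFq]]] := no_progress_step Hnp Hng.
  by case: (avoiding_move_uniq Hb Hb1u) HFq => -> ->.
have Hge : hanoi_dist B k p <= hanoi_dist (move_disk B 1 v) k p.
  rewrite leqNgt; apply/negP => lt; apply: Hnp.
  by exists u, 1, v; split; rewrite // eq_sym.
have Hup : hanoi_dist (move_disk B 1 v) k p <= (hanoi_dist (move_disk B 1 u) k p).+1.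
  have Hm : legal_move k (move_disk B 1 u) 1 v.
    by apply: legal_move_smallest => //; rewrite /move_disk eqxx eq_sym.
  by have := hanoi_dist_move_le p Hm; rewrite move_disk_twice.
split; last lia.
exists (B 1), 1, u; rewrite move_disk_twice; split=> //; last lia.
split; rewrite /move_disk ?eqxx 1?eq_sym //.
by apply: legal_move_smallest; rewrite // /move_disk eqxx.
Qed.

Lemma round_displacing_disk1 B v N : v = B 1 -> (hanoi_dist B k p).+4 <= N.+1 ->
  exists w j q, [/\ w != v, avoiding_move k B w j q &
    potential_le (move_disk B j q) w N].
Proof.
move=> vB HF; set w := another_peg v.
have wv : w != v by exact: another_peg_neq.
have vw : v != w by rewrite eq_sym.
set u := third v w.
have Hb : legal_move k B 1 u by apply: legal_move_smallest; rewrite // -vB third_neql.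
exists w, 1, u; split=> //; first by split=> //; [rewrite -vB | rewrite third_neqr].
have Fle := hanoi_dist_move_le p Hb.
case: (classic (progress_available (move_disk B 1 u) w)) => g.
  by left; split=> //; lia.
right; left; split=> //; split; last lia.
by rewrite /move_disk eqxx eq_sym third_neqr.
Qed.

Lemma potential_round B v N : potential_le B v N.+1 -> ~ ready B v ->
  exists w j q, [/\ w != v, avoiding_move k B w j q &
    ready (move_disk B j q) w \/ potential_le (move_disk B j q) w N].
Proof.
case=> [[Hp HF]|[[Hnp [vB HF]]|[_ [vB HF]]]] Hnr.
- exact: round_with_progress.
- have [w [j [q [? ? ?]]]] := round_without_progress Hnp vB Hnr HF.
  by exists w, j, q; split=> //; right.
- have [w [j [q [? ? ?]]]] := round_displacing_disk1 vB HF.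
  by exists w, j, q; split=> //; right.
Qed.
End Rounds.

Section Play.
Variables (n : nat) (ec : ending).

Definition play (s : state n) (d : 'I_n) (q : 'I_3) : state n :=
  State [ffun i => if i == d then q else cfg s i] (Some d)
        (movedL s || (nat_of_ord d == n.-1)) (movedS s || (nat_of_ord d == 0)).

Lemma game_move_play s d q :
  ~ game_over ec s -> hanoi_move (cfg s) d q -> last_disk s <> Some d ->
  (is_tower (cfg (play s d q)) -> game_over ec (play s d q)) ->
  game_move ec s (play s d q).
Proof. by move=> ? ? ? ?; split=> //; exists d, q. Qed.

Lemma game_moveP s s' : game_move ec s s' ->
  exists d q, [/\ hanoi_move (cfg s) d q, last_disk s <> Some d & s' = play s d q].
Proof.
case=> _ [d [q [Hm [Hl [Hc [Hld [HL [HS _]]]]]]]]; exists d, q; split=> //.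
by case: s' Hc Hld HL HS => /= ? ? ? ? -> -> -> ->.
Qed.

Lemma game_over_tower (s : state n) : game_over ec s -> is_tower (cfg s).
Proof.
case: ec => [f||||] /=; first by exists f.
- by case=> ? _; exists peg1.
- by case=> ? _; exists peg1.
- by case=> [[r ?] _]; exists r.
- by case=> [[r ?] _]; exists r.
Qed.

Lemma not_tower (c : config n) (a b : 'I_n) : c a != c b -> ~ is_tower c.
Proof. by move=> h [r hr]; rewrite !hr eqxx in h. Qed.

Lemma final_peg_exists : exists p, forall s : state n,
  tower_on (cfg s) p -> movedL s -> movedS s -> game_over ec s.
Proof.
case: ec => [f||||]; first by exists f.
all: by exists peg1 => s T HL HS; split=> //; exists peg1.
Qed.

End Play.

Lemma hanoi_move0 n (c : config n.+1) q : q != c ord0 -> hanoi_move c ord0 q.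
Proof. by move=> /eqP qc; split=> [i|]; rewrite ?ltn0 //; split=> // i; rewrite ltn0. Qed.

Section Game.
Variables (m : nat) (ec : ending).
Local Notation n := m.+2.
Local Notation st := (state n).

(* The big disks [1..n-1] of a configuration; the value at [0] is junk. *)
Definition big_disks (c : config n) : nat -> 'I_3 :=
  fun i => if 0 < i < n then c (inord i) else p0.

Definition anh_to_move (s : st) := last_disk s <> Some ord0 /\ ~ game_over ec s.

Lemma big_disksE (c : config n) (i : 'I_n) : 0 < i -> big_disks c i = c i.
Proof. by move=> i0; rewrite /big_disks i0 ltn_ord inord_val. Qed.

Lemma play0E (s : st) w (i : 'I_n) : 0 < i -> cfg (play s ord0 w) i = big_disks (cfg s) i.
Proof. by move=> i0; rewrite ffunE ifF ?big_disksE //; apply/eqP => E; rewrite E in i0. Qed.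

Lemma big_disks_round (s : st) w j q : 0 < j < n ->
  big_disks (cfg (play (play s ord0 w) (inord j) q)) = move_disk (big_disks (cfg s)) j q.
Proof.
move=> jn; apply: functional_extensionality => i; rewrite /big_disks /move_disk.
case: ifP => [Hi|Hi]; last first.
  by rewrite ifF //; apply/eqP => E; subst i; rewrite jn in Hi.
have [[_ jn'] [i0 iin]] := (andP jn, andP Hi).
rewrite !ffunE -val_eqE /= !inordK //; case: (i == j) => //.
by rewrite ifF //; apply/eqP => /(congr1 val); rewrite /= inordK // => E; rewrite E in i0.
Qed.

Lemma play0_at0 (s : st) w : cfg (play s ord0 w) ord0 = w.
Proof. by rewrite ffunE eqxx. Qed.

Lemma hanoi_move_after0 (s : st) w j q :
  avoiding_move m.+1 (big_disks (cfg s)) w j q ->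
  hanoi_move (cfg (play s ord0 w)) (inord j) q.
Proof.
move=> [[/andP[j0 jm] qj Hi] jw qw]; have jn : j < n by lia.
have c'j : cfg (play s ord0 w) (inord j) = big_disks (cfg s) j.
  by rewrite play0E inordK.
have below (i : 'I_n) : i < j ->
    (cfg (play s ord0 w) i != big_disks (cfg s) j) && (cfg (play s ord0 w) i != q).
  move=> ij; have [i0|i0] := posnP i.
    by rewrite (_ : i = ord0) ?play0_at0 1?eq_sym ?jw 1?eq_sym ?qw //; exact: val_inj.
  by rewrite play0E //; apply: Hi; rewrite i0.
rewrite /hanoi_move c'j; split; last split.
- by move=> i; rewrite inordK // => /below /andP[/eqP].
- exact/eqP.
- by move=> i; rewrite inordK // => /below /andP[_ /eqP].
Qed.

Lemma avoiding_of_hanoi_move (s : st) w (d : 'I_n) q :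
  0 < d -> hanoi_move (cfg (play s ord0 w)) d q ->
  avoiding_move m.+1 (big_disks (cfg s)) w d q.
Proof.
move=> d0 [H1 [H2 H3]]; have dn := ltn_ord d.
have c'd : cfg (play s ord0 w) d = big_disks (cfg s) d by rewrite play0E.
split; first split.
- by rewrite d0 /=; lia.
- by rewrite -c'd; apply/eqP.
- move=> i /andP[i0 id]; have iN : i < n by lia.
  have -> : big_disks (cfg s) i = cfg (play s ord0 w) (inord i) by rewrite play0E inordK.
  by rewrite -c'd; apply/andP; split; apply/eqP; [apply: H1|apply: H3]; rewrite inordK.
- by rewrite -c'd; apply/eqP => E; apply: (H1 ord0) => //; rewrite play0_at0.
- by apply/eqP => E; apply: (H3 ord0) => //; rewrite play0_at0.
Qed.

Lemma anh_round (s : st) w j q :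
  anh_to_move s -> w != cfg s ord0 -> avoiding_move m.+1 (big_disks (cfg s)) w j q ->
  (forall s'' : st, game_move ec s (play s ord0 w) -> game_move ec (play s ord0 w) s'' ->
     big_disks (cfg s'') = move_disk (big_disks (cfg s)) j q ->
     cfg s'' ord0 = w -> anh_to_move s'' -> mover_wins ec s'') ->
  mover_wins ec s.
Proof.
move=> [Hl Hgo] wv Hav Hcont.
have [[/andP[j0 jm] _ _] jw qw] := Hav; have jn : j < n by lia.
have j'0 : inord j != ord0 :> 'I_n by rewrite -val_eqE /= inordK //; lia.
set s' := play s ord0 w; set s'' := play s' (inord j) q.
have s''0 : cfg s'' ord0 = w by rewrite ffunE eq_sym (negbTE j'0) play0_at0.
have s'_open : ~ is_tower (cfg s').
  by apply: (@not_tower _ _ (inord j) ord0); rewrite play0E inordK // play0_at0.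
have s''_open : ~ is_tower (cfg s'').
  by apply: (@not_tower _ _ (inord j) ord0); rewrite s''0 ffunE eqxx.
have Hmv' : game_move ec s s'.
  by apply: game_move_play => //; exact: hanoi_move0.
have Hmv'' : game_move ec s' s''.
  apply: game_move_play; first by move/game_over_tower/s'_open.
  - exact: hanoi_move_after0.
  - by case=> /eqP; rewrite eq_sym (negbTE j'0).
  - by move/s''_open.
apply: (MoverWins Hmv'); right; split; first by exists s''.
move=> t Hmv; have [d [q' [Hm Hld Et]]] := game_moveP Hmv; rewrite {}Et in Hmv *.
have d0 : 0 < d.
  by rewrite lt0n; apply/eqP => E; apply: Hld; congr Some; exact: val_inj.
have [Ed ->] := avoiding_move_uniq (avoiding_of_hanoi_move d0 Hm) Hav.
have -> : d = inord j by apply: val_inj; rewrite /= inordK -?Ed.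
rewrite -/s''; apply: Hcont => //; first by apply: big_disks_round; rewrite j0.
split; last by move/game_over_tower/s''_open.
by case=> /eqP; rewrite (negbTE j'0).
Qed.

Lemma ready_largest (s : st) p v :
  ready m.+1 p (big_disks (cfg s)) v -> cfg s ord_max = p.
Proof. by case=> H _; rewrite -big_disksE //; apply: H; rewrite /= leqnn. Qed.

Lemma ready_tower (s : st) p :
  ready m.+1 p (big_disks (cfg s)) (cfg s ord0) -> tower_on (cfg (play s ord0 p)) p.
Proof.
case=> H _ i; have [i0|i0] := posnP i.
  by rewrite (_ : i = ord0) ?play0_at0 //; exact: val_inj.
by rewrite play0E //; apply: H; rewrite i0 /= -ltnS.
Qed.

Lemma anh_finishes (s : st) p : anh_to_move s ->
  ready m.+1 p (big_disks (cfg s)) (cfg s ord0) -> game_over ec (play s ord0 p) ->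
  mover_wins ec s.
Proof.
move=> [Hl Hgo] [_ /eqP vp] Hov; apply: (MoverWins (s' := play s ord0 p)); last by left.
by apply: game_move_play => //; apply: hanoi_move0; apply/eqP => E; apply: vp.
Qed.

Section Gathering.
Variables (p : 'I_3) (inv : st -> Prop).
Hypothesis inv_move : forall s s', game_move ec s s' -> inv s -> inv s'.
Hypothesis win_when_ready : forall s, anh_to_move s -> inv s ->
  ready m.+1 p (big_disks (cfg s)) (cfg s ord0) -> mover_wins ec s.

Lemma win_within N s : anh_to_move s -> inv s ->
  potential_le m.+1 p (big_disks (cfg s)) (cfg s ord0) N -> mover_wins ec s.
Proof.
elim: N s => [|N IH] s Hok Hinv Hpot; first by case: (potential_le0 Hpot).
case: (classic (ready m.+1 p (big_disks (cfg s)) (cfg s ord0))) => Hr.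
  exact: win_when_ready.
have [w [j [q [wv Hav Hnext]]]] := potential_round (ltn0Sn m) Hpot Hr.
apply: (anh_round Hok wv Hav) => s'' Hmv' Hmv'' Eb E0 Hok''.
have Hinv'' : inv s'' by apply: (inv_move Hmv''); apply: (inv_move Hmv').
by case: Hnext; rewrite -Eb -E0 => Hnext; [apply: win_when_ready | apply: IH].
Qed.

Lemma win_by_gathering s : anh_to_move s -> inv s -> mover_wins ec s.
Proof.
have [N HN] := potential_le_exists m.+1 p (big_disks (cfg s)) (cfg s ord0).
by move=> Hok Hinv; apply: (win_within Hok Hinv HN).
Qed.

End Gathering.

Definition largest_moved_or_off (p : 'I_3) (s : st) := movedL s || (cfg s ord_max != p).

Lemma largest_moved_or_off_move p s s' : game_move ec s s' ->
  largest_moved_or_off p s -> largest_moved_or_off p s'.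
Proof.
move=> /game_moveP [d [q [_ _ ->]]]; rewrite /largest_moved_or_off /= ffunE.
case/orP => [->//|Hn]; have [<-|Nd] := eqVneq ord_max d; first by rewrite eqxx orbT.
by rewrite Hn !orbT.
Qed.

Lemma anh_wins (s : st) : anh_to_move s -> mover_wins ec s.
Proof.
have [P HP] := final_peg_exists n ec.
have final (s1 : st) : anh_to_move s1 -> largest_moved_or_off P s1 -> mover_wins ec s1.
  apply: (win_by_gathering (p := P) (inv := largest_moved_or_off P)).
    exact: largest_moved_or_off_move.
  move=> s2 Hok HL Hr; apply: (anh_finishes Hok Hr); apply: HP.
  - exact: ready_tower.
  - by move: HL; rewrite /largest_moved_or_off (ready_largest Hr) eqxx orbF /= => ->.
  - by rewrite /= orbT.
move=> Hok; apply: (win_by_gathering (p := another_peg P) (inv := fun=> True)) => // s1 Hok1 _ Hr.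
by apply: final; rewrite // /largest_moved_or_off (ready_largest Hr) another_peg_neq orbT.
Qed.

End Game.

Lemma single_disk_wins ec (s : state 1) : valid_ending 1 ec -> ~ game_over ec s ->
  last_disk s <> Some ord0 -> mover_wins ec s.
Proof.
move=> Hv Hgo Hl.
have tower1 T : tower_on (cfg (play s ord0 T)) T by move=> i; rewrite ffunE (ord1 i) eqxx.
suff [T [HT Hov]] : exists T, T != cfg s ord0 /\ game_over ec (play s ord0 T).
  apply: (MoverWins (s' := play s ord0 T)); last by left.
  by apply: game_move_play => //; exact: hanoi_move0.
set T := another_peg (cfg s ord0); have HT : T != cfg s ord0 by exact: another_peg_neq.
case: ec Hv Hgo => [f||||] //= Hv Hgo.
- exists f; split; last exact: tower1.
  by apply/eqP => E; apply: Hgo => i; rewrite (ord1 i) E.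
- by exists T; split=> //; split; [exists T; exact: tower1 | rewrite orbT].
- by exists T; split=> //; split; [exists T; exact: tower1 | rewrite orbT].
Qed.

Lemma initial_not_over n ec : 0 < n -> valid_ending n ec -> ~ game_over ec (initial_state n).
Proof.
move=> n0; case: ec => [f||||] Hv /=; try by case.
by move=> T; apply: Hv; have := T (Ordinal n0); rewrite ffunE.
Qed.

Theorem corollary2 (n : nat) (ec : ending) :
  0 < n -> valid_ending n ec ->
  mover_wins ec (initial_state n) /\
  (forall s : state n,
     ~ game_over ec s ->
     (forall d : 'I_n, last_disk s = Some d -> nat_of_ord d <> 0) ->
     mover_wins ec s).
Proof.
move=> n0 Hv.
suff Hwin : forall s : state n, ~ game_over ec s ->
    (forall d : 'I_n, last_disk s = Some d -> nat_of_ord d <> 0) -> mover_wins ec s.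
  by split=> //; apply: Hwin; [exact: initial_not_over | by []].
case: n n0 Hv => [//|[|m]] _ Hv s Hgo Hl.
- by apply: single_disk_wins => // /Hl.
- by apply: anh_wins; split=> // /Hl.
Qed.
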